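(* Let $M$ be a finite cyclic group, let $s,t\in M$ and let $d>1$ be an integer. Then there are integers $k,l$ with $s^k=t^l$ such that $d$ does not divide both $k$ and $l$. *)

From mathcomp Require Import all_boot all_fingroup all_algebra.
Set Implicit Arguments. Unset Strict Implicit. Unset Printing Implicit Defensive.

Definition zexpg (gT : finGroupType) (x : gT) (k : int) : gT :=
  match k with
  | Posz n => (x ^+ n)%g
  | Negz n => (x ^- n.+1)%g
  end.

(* In a cyclic group there is exactly one subgroup of each order dividing the
   group order.  With g = gcd(#[s], #[t]), the power s^(#[s]/g) generates the
   subgroup of order g, which is contained in <[t]>, and symmetrically
   t^(#[t]/g) lies in <[s]>.  The exponents #[s]/g and #[t]/g are coprime, so
   d > 1 cannot divide both of them: one of the two relations does the job. *)
From mathcomp Require Import all_boot all_fingroup all_solvable all_algebra.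

Set Implicit Arguments.
Unset Strict Implicit.
Unset Printing Implicit Defensive.

Lemma coprime_divn_gcd m n :
  0 < gcdn m n -> coprime (m %/ gcdn m n) (n %/ gcdn m n).
Proof.
move=> g_gt0; rewrite /coprime -(eqn_pmul2r g_gt0) mul1n muln_gcdl.
by rewrite !divnK ?dvdn_gcdl ?dvdn_gcdr.
Qed.

Lemma coprime_ndvdn d m n :
  1 < d -> coprime m n -> ~~ (d %| m) || ~~ (d %| n).
Proof.
move=> d_gt1 co_mn; rewrite -negb_and -dvdn_gcd (eqP co_mn) dvdn1.
by rewrite neq_ltn d_gt1 orbT.
Qed.

Section CyclicGroup.
Local Open Scope group_scope.

Variables (gT : finGroupType) (M : {group gT}).
Hypothesis cycM : cyclic M.

Lemma mem_cycle_cyclic x y :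
  x \in M -> y \in M -> #[x] %| #[y] -> x \in <[y]>.
Proof.
by move=> xM yM dvd_xy; rewrite -cycle_subG -(cardSg_cyclic cycM) ?cycle_subG.
Qed.

Lemma expg_order_div_gcd_mem_cycle x y : x \in M -> y \in M ->
  x ^+ (#[x] %/ gcdn #[x] #[y]) \in <[y]>.
Proof.
move=> xM yM; apply: mem_cycle_cyclic; rewrite ?groupX //.
rewrite orderXdiv ?dvdn_div ?dvdn_gcdl // divnA ?dvdn_gcdl //.
by rewrite mulKn ?order_gt0 ?dvdn_gcdr.
Qed.

End CyclicGroup.

Theorem lemma4p2 (gT : finGroupType) (M : {group gT}) (s t : gT) (d : nat) :
  cyclic M -> s \in M -> t \in M -> (1 < d)%N ->
  exists k l : int, zexpg s k = zexpg t l /\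
    ~ ((d%:Z %| k)%Z /\ (d%:Z %| l)%Z).
Proof.
move=> cycM sM tM d_gt1.
have /cycleP[l s_t] := expg_order_div_gcd_mem_cycle cycM sM tM.
have /cycleP[k t_s] := expg_order_div_gcd_mem_cycle cycM tM sM.
rewrite gcdnC in t_s; set g := gcdn _ _ in s_t t_s.
have g_gt0 : 0 < g by rewrite gcdn_gt0 order_gt0.
case/orP: (coprime_ndvdn d_gt1 (coprime_divn_gcd g_gt0)) => ndvd.
- exists (Posz (#[s]%g %/ g)), (Posz l); split=> // -[].
  by rewrite dvdzE (negbTE ndvd).
- exists (Posz k), (Posz (#[t]%g %/ g)); split=> // -[_].
  by rewrite dvdzE (negbTE ndvd).
Qed.
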